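(* Let $(X,d)$ be an ultrametric space and $f:X\to X$ a surjective isometry. Then $(X,d,f)$ has the two-sided shadowing property.
   Context: An ultrametric space satisfies $d(x,z)\le\max\{d(x,y),d(y,z)\}$. For a bijection $f$, the two-sided shadowing property means: for every $\varepsilon>0$ there is $\delta>0$ such that for every sequence $(x_n)_{n\in\mathbb{Z}}$ with $d(f(x_n),x_{n+1})<\delta$ for all $n\in\mathbb{Z}$ there is $x\in X$ with $d(f^n(x),x_n)<\varepsilon$ for all $n\in\mathbb{Z}$ (negative powers being powers of $f^{-1}$). *)

From Stdlib Require Import Reals ZArith ClassicalEpsilon.
Open Scope R_scope.

Definition is_ultrametric {X : Type} (d : X -> X -> R) : Prop :=
  (forall x y, 0 <= d x y) /\
  (forall x y, d x y = 0 <-> x = y) /\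
  (forall x y, d x y = d y x) /\
  (forall x y z, d x z <= d x y + d y z) /\
  (forall x y z, d x z <= Rmax (d x y) (d y z)).

Definition isometry {X : Type} (d : X -> X -> R) (f : X -> X) : Prop :=
  forall x y, d (f x) (f y) = d x y.

Definition surjective {X : Type} (f : X -> X) : Prop :=
  forall y, exists x, f x = y.

(* A (choice-based) preimage function; it is the inverse f^{-1} whenever f is
   a bijection. *)
Definition finv {X : Type} (f : X -> X) (y : X) : X :=
  epsilon (inhabits y) (fun x => f x = y).

Definition zpow {X : Type} (f : X -> X) (n : Z) : X -> X :=
  match n with
  | Z0 => fun x => x
  | Zpos p => Nat.iter (Pos.to_nat p) f
  | Zneg p => Nat.iter (Pos.to_nat p) (finv f)
  end.

Definition two_sided_shadowing {X : Type} (d : X -> X -> R) (f : X -> X) : Prop :=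
  forall eps, 0 < eps -> exists delta, 0 < delta /\
    forall xs : Z -> X, (forall n : Z, d (f (xs n)) (xs (n + 1)%Z) < delta) ->
      exists x : X, forall n : Z, d (zpow f n x) (xs n) < eps.

(* In an ultrametric space a chain of points each within [eps] of the next
   stays within [eps] of its start, and an isometry does not enlarge
   distances.  So along a [delta]-pseudo-orbit with [delta = eps] the true
   orbit of [xs 0] never drifts: at every step the new error is the maximum
   of the old one (transported by the isometry) and the jump of the
   pseudo-orbit, both below [eps]. *)
From Stdlib Require Import Reals ZArith Lia ClassicalEpsilon.
Open Scope R_scope.

Lemma f_finv {X : Type} (f : X -> X) :
  surjective f -> forall y, f (finv f y) = y.
Proof.
  intros f_surj y. unfold finv. apply epsilon_spec, f_surj.
Qed.

Section UltrametricIsometry.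

Variables (X : Type) (d : X -> X -> R) (f : X -> X).
Hypothesis d_refl : forall x, d x x = 0.
Hypothesis d_sym : forall x y, d x y = d y x.
Hypothesis d_ultra : forall x y z, d x z <= Rmax (d x y) (d y z).
Hypothesis f_iso : isometry d f.

Lemma ultra_lt_trans (eps : R) (x y z : X) :
  d x y < eps -> d y z < eps -> d x z < eps.
Proof.
  intros Hxy Hyz. eapply Rle_lt_trans; [apply (d_ultra x y z)|].
  now apply Rmax_lub_lt.
Qed.

Variables (eps : R) (xs : Z -> X).
Hypothesis eps_pos : 0 < eps.
Hypothesis xs_pseudo_orbit : forall n : Z, d (f (xs n)) (xs (n + 1)%Z) < eps.

Lemma iter_shadows_forward (k : nat) :
  d (Nat.iter k f (xs 0%Z)) (xs (Z.of_nat k)) < eps.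
Proof.
  induction k as [|k IH]; simpl.
  - now rewrite d_refl.
  - apply ultra_lt_trans with (f (xs (Z.of_nat k))).
    + now rewrite f_iso.
    + replace (Z.pos (Pos.of_succ_nat k)) with (Z.of_nat k + 1)%Z by lia.
      apply xs_pseudo_orbit.
Qed.

Lemma iter_finv_shadows_backward (f_surj : surjective f) (k : nat) :
  d (Nat.iter k (finv f) (xs 0%Z)) (xs (- Z.of_nat k)%Z) < eps.
Proof.
  induction k as [|k IH]; simpl.
  - now rewrite d_refl.
  - rewrite <- f_iso, f_finv by exact f_surj.
    apply ultra_lt_trans with (xs (- Z.of_nat k)%Z); [exact IH|].
    rewrite d_sym.
    replace (- Z.of_nat k)%Z with (Z.neg (Pos.of_succ_nat k) + 1)%Z by lia.
    apply xs_pseudo_orbit.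
Qed.

Lemma zpow_shadows (f_surj : surjective f) (n : Z) :
  d (zpow f n (xs 0%Z)) (xs n) < eps.
Proof.
  destruct n as [|p|p]; simpl.
  - now rewrite d_refl.
  - rewrite <- (positive_nat_Z p). apply iter_shadows_forward.
  - rewrite <- Pos2Z.opp_pos, <- (positive_nat_Z p).
    now apply iter_finv_shadows_backward.
Qed.

End UltrametricIsometry.

Theorem proposition5p7 (X : Type) (d : X -> X -> R) (f : X -> X) :
  is_ultrametric d -> isometry d f -> surjective f -> two_sided_shadowing d f.
Proof.
  intros [_ [d_zero [d_sym [_ d_ultra]]]] f_iso f_surj eps eps_pos.
  exists eps; split; [exact eps_pos|].
  intros xs xs_pseudo_orbit. exists (xs 0%Z). intro n.
  apply zpow_shadows; auto.
  intro x. now apply d_zero.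
Qed.
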